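(* For every non-negative integer $n$, \[ \sum_{k=0}^{n}(-1)^{k}\frac{2^{2k}}{2k+1}\frac{\binom{n}{k}}{\binom{2k}{k}}=\frac{1}{2n+1} \qquad\text{and}\qquad \sum_{k=0}^{n}(-1)^{k+1}2^{2k}\frac{k}{2k+1}\frac{\binom{n}{k}}{\binom{2k}{k}}=\frac{2n}{(2n+1)(2n-1)}. \] *)

From mathcomp Require Import all_boot all_order all_algebra.

From mathcomp Require Import all_boot all_order all_algebra.
From mathcomp Require Import zify ring.

Set Implicit Arguments.
Unset Strict Implicit.
Unset Printing Implicit Defensive.

Import GRing.Theory Num.Theory.
Local Open Scope ring_scope.

(* Both sums are hypergeometric.  If (s (m + 1) + b) w_(m+1) = - s (n - m) w_m
   for m < n, then (s n + b) (w_0 + ... + w_m) = b w_0 + s (n - m) w_m, and at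
   m = n the boundary term vanishes.  The terms u_k = (-4)^k C(n,k) / C(2k,k)
   satisfy (2k + 1) u_(k+1) = -2 (n - k) u_k, so the u_k (b = -1) sum to
   -1/(2n - 1) and the u_k / (2k + 1) (b = 1) sum to 1/(2n + 1).  Finally
   -k/(2k + 1) = (1/(2k + 1) - 1)/2 makes the second sum half the difference
   of these two. *)

Lemma partial_sum_recurrence (R : comRingType) (s b : R) (n : nat) (w : nat -> R) :
    (forall m, (m < n)%N -> (s * m.+1%:R + b) * w m.+1 = - (s * (n - m)%:R) * w m) ->
  forall m, (m <= n)%N ->
    (s * n%:R + b) * \sum_(0 <= k < m.+1) w k = b * w 0%N + s * (n - m)%:R * w m.
Proof.
move=> rec; elim=> [|m IHm] lt_m_n.
  by rewrite big_nat1 subn0 mulrDl addrC.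
rewrite big_nat_recr //= mulrDr IHm ?(ltnW lt_m_n) // -[_ * w m]opprK -mulNr -rec //.
have -> : (n%:R : R) = (n - m.+1)%:R + m.+1%:R by rewrite -natrD subnK.
ring.
Qed.

Lemma mul_bin_central k :
  (k.+1 * 'C(2 * k.+1, k.+1) = 2 * (2 * k).+1 * 'C(2 * k, k))%N.
Proof.
have -> : (2 * k.+1 = (2 * k).+2)%N by lia.
have down := mul_bin_down (2 * k).+1 k.
rewrite -mul_bin_diag -mulnA /= {}down mulnA.
by congr (_ * _)%N; lia.
Qed.

Section CentralBinomialRatio.

Variable F : numFieldType.

Definition central_bin_ratio (n k : nat) : F := 'C(n, k)%:R / 'C(2 * k, k)%:R.

Lemma natr_central_bin_neq0 k : 'C(2 * k, k)%:R != 0 :> F.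
Proof. by rewrite pnatr_eq0 -lt0n bin_gt0 leq_pmull. Qed.

Lemma central_bin_ratioS n k : (k < n)%N ->
  (2 * (2 * k).+1)%:R * central_bin_ratio n k.+1 = (n - k)%:R * central_bin_ratio n k.
Proof.
move=> lt_k_n; rewrite /central_bin_ratio.
have k1_neq0 : k.+1%:R != 0 :> F by rewrite pnatr_eq0.
rewrite -['C(n, _)%:R](mulKf k1_neq0) -natrM mul_bin_left.
rewrite -['C(2 * _, _)%:R](mulKf k1_neq0) -natrM mul_bin_central !natrM.
by field; rewrite natr_central_bin_neq0 -natrM -!mulrS !pnatr_eq0.
Qed.

Lemma odd_natr_neq0 k : (2 * k + 1)%:R != 0 :> F.
Proof. by rewrite addn1 pnatr_eq0. Qed.

Definition alt_ratio (n k : nat) : F := (-1) ^+ k * 2 ^+ (2 * k) * central_bin_ratio n k.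

Lemma alt_ratioS n k : (k < n)%N ->
  (2 * k%:R + 1) * alt_ratio n k.+1 = - (2 * (n - k)%:R) * alt_ratio n k.
Proof.
move=> lt_k_n; rewrite /alt_ratio exprS mulnS exprD.
transitivity (- (2 * (-1) ^+ k * 2 ^+ (2 * k))
              * ((2 * (2 * k).+1)%:R * central_bin_ratio n k.+1)); first by ring.
by rewrite central_bin_ratioS //; ring.
Qed.

Lemma alt_ratio0 n : alt_ratio n 0 = 1.
Proof. by rewrite /alt_ratio /central_bin_ratio !bin0 !expr0 divr1 !mul1r. Qed.

Lemma sum_alt_ratio n : \sum_(0 <= k < n.+1) alt_ratio n k = - ((2 * n)%:R - 1)^-1.
Proof.
have rec m : (m < n)%N ->
    (2 * m.+1%:R - 1) * alt_ratio n m.+1 = - (2 * (n - m)%:R) * alt_ratio n m.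
  by move=> lt_m_n; rewrite -alt_ratioS //; congr (_ * _); ring.
have := partial_sum_recurrence rec (leqnn n).
rewrite subnn mulr0 mul0r addr0 alt_ratio0 mulr1 natrM.
have nz : 2 * n%:R - 1 != 0 :> F by rewrite -natrM subr_eq0 pnatr_eq1; lia.
by move/(canRL (mulKf nz)); rewrite mulrN1.
Qed.

Lemma sum_alt_ratio_odd n :
  \sum_(0 <= k < n.+1) alt_ratio n k / (2 * k + 1)%:R = 1 / (2 * n + 1)%:R.
Proof.
have rec m : (m < n)%N -> (2 * m.+1%:R + 1) * (alt_ratio n m.+1 / (2 * m.+1 + 1)%:R)
                         = - (2 * (n - m)%:R) * (alt_ratio n m / (2 * m + 1)%:R).
  move=> lt_m_n; have -> : 2 * m.+1%:R + 1 = (2 * m.+1 + 1)%:R :> F by rewrite natrD natrM.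
  rewrite mulrC divfK ?odd_natr_neq0 //.
  have := odd_natr_neq0 m; rewrite natrD natrM => odd_m_neq0.
  by rewrite mulrA -alt_ratioS // mulrAC divff ?mul1r.
have := partial_sum_recurrence rec (leqnn n).
rewrite subnn mulr0 mul0r addr0 alt_ratio0 muln0 add0n divr1 mulr1.
have -> : 2 * n%:R + 1 = (2 * n + 1)%:R :> F by rewrite natrD natrM.
by move/(canRL (mulKf (odd_natr_neq0 n))); rewrite mulr1 div1r.
Qed.

End CentralBinomialRatio.

Theorem corollary28 (n : nat) :
  \sum_(0 <= k < n.+1)
      (-1) ^+ k * (2 ^+ (2 * k) / (2 * k + 1)%:R) * ('C(n, k)%:R / 'C(2 * k, k)%:R)
    = 1 / (2 * n + 1)%:R :> rat
  /\
  \sum_(0 <= k < n.+1)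
      (-1) ^+ k.+1 * 2 ^+ (2 * k) * (k%:R / (2 * k + 1)%:R) * ('C(n, k)%:R / 'C(2 * k, k)%:R)
    = (2 * n)%:R / ((2 * n + 1)%:R * ((2 * n)%:R - 1)) :> rat.
Proof.
split.
  rewrite -(sum_alt_ratio_odd rat n); apply: eq_bigr => k _.
  by rewrite /alt_ratio /central_bin_ratio; ring.
rewrite (eq_bigr (fun k => (alt_ratio rat n k / (2 * k + 1)%:R - alt_ratio rat n k) / 2)).
  rewrite -mulr_suml sumrB sum_alt_ratio_odd sum_alt_ratio.
  by field; rewrite -natrM natr1 subr_eq0 pnatr_eq1 pnatr_eq0 andbT; lia.
move=> k _; rewrite /alt_ratio /central_bin_ratio exprS.
by field; rewrite natr_central_bin_neq0 -natrM natr1 pnatr_eq0.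
Qed.
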